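(* Let $\phi$ be a Drinfeld $A[\underline{t}_s]$-module over $\mathbb{T}_s$ with $\phi_\theta=\theta+A_1\tau+\dots+A_r\tau^r$, $A_r\in\mathbb{T}_s^\times$, and suppose $\Psi\in\mathrm{GL}_r(\mathbb{T}_s\{z/\theta\})$ satisfies $\Psi^{(-1)}=\Phi\Psi$. Set \[ V_\phi=\{\mathbf{g}\in\mathrm{Mat}_{1\times r}(\mathbb{T}_s\{z/\theta\}) \mid \mathbf{g}^{(-1)}\Phi=\mathbf{g}\}. \] Then: (a) $V_\phi=\mathrm{Mat}_{1\times r}(\mathbb{F}_q[\underline{t}_s][z])\,\Psi^{-1}$; (b) $V_\phi$ is a free $\mathbb{F}_q[\underline{t}_s][z]$-module of rank $r$; (c) $V_\phi\cap\mathrm{Mat}_{1\times r}(\mathbb{T}_s[z])=\{0\}$.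
   Context: $\mathbb{F}_q$ finite field, $\theta,t_1,\dots,t_s,z$ independent variables, $A[\underline{t}_s]=\mathbb{F}_q[\theta,t_1,\dots,t_s]$, $\mathbb{F}_q[\underline{t}_s]=\mathbb{F}_q[t_1,\dots,t_s]$. $\mathbb{C}_\infty$: completion of an algebraic closure of $\mathbb{F}_q((1/\theta))$, $|\theta|_\infty=q$. $\mathbb{T}_s$: Tate algebra of power series in $t_1,\dots,t_s$ over $\mathbb{C}_\infty$ with coefficients tending to $0$, Gauss norm $\|\cdot\|_\infty$. $\tau$: automorphism raising $\mathbb{C}_\infty$-coefficients to the $q$-th power, $f^{(n)}=\tau^n(f)$ ($n\in\mathbb{Z}$), applied entrywise to matrices and coefficientwise to power series in $z$ (fixing $z$). $\mathbb{T}_s[\tau]$: twisted polynomial ring with $\tau f=f^{(1)}\tau$. A Drinfeld $A[\underline{t}_s]$-module is an $\mathbb{F}_q[\underline{t}_s]$-algebra homomorphism $\phi:A[\underline{t}_s]\to\mathbb{T}_s[\tau]$ with $\phi_\theta=\theta+A_1\tau+\dots+A_r\tau^r$. $\mathbb{T}_s\{z/\theta\}=\{\sum_{i\ge0}a_iz^i: a_i\in\mathbb{T}_s,\ q^i\|a_i\|_\infty\to0\}$. $\Phi\in\mathrm{Mat}_r(\mathbb{T}_s[z])$ has $i$-th row the $(i+1)$-st standard basis row vector for $1\le i\le r-1$ and last row $\big[(z-\theta)/A_r^{(-r)},-A_1^{(-1)}/A_r^{(-r)},\dots,-A_{r-1}^{(-r+1)}/A_r^{(-r)}\big]$. *)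

From HB Require Import structures.
From mathcomp Require Import all_boot all_order all_algebra.
From mathcomp Require Import reals.
From Stdlib Require Import ClassicalEpsilon.

Set Implicit Arguments.
Unset Strict Implicit.
Unset Printing Implicit Defensive.

Import Order.TTheory GRing.Theory Num.Theory.
Local Open Scope ring_scope.

(* Abstract model of C_infty: a field C with a ring embedding iota : F_q -> C,
   an element theta, and a real-valued absolute value nrm such that
   nrm is a non-archimedean absolute value with |theta| = q, C is complete,
   algebraically closed (closedFieldType) and the elements algebraic over
   F_q(theta) are dense.  These axioms characterize C_infty up to isometric
   isomorphism. *)
Record Cinf_axioms (F : finFieldType) (C : closedFieldType) (R : realType)
    (iota : {rmorphism F -> C}) (theta : C) (nrm : C -> R) : Prop := {
  nrm_ge0 : forall x, 0 <= nrm x;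
  nrm0 : nrm 0 = 0;
  nrm_eq0 : forall x, nrm x = 0 -> x = 0;
  nrmM : forall x y, nrm (x * y) = nrm x * nrm y;
  nrm_ultra : forall x y, nrm (x + y) <= Num.max (nrm x) (nrm y);
  nrm_theta : nrm theta = (#|F|)%:R;
  nrm_complete : forall u : nat -> C,
    (forall eps : R, 0 < eps -> exists N, forall m n, (N <= m)%N -> (N <= n)%N ->
        nrm (u m - u n) < eps) ->
    exists l, forall eps : R, 0 < eps -> exists N, forall n, (N <= n)%N ->
        nrm (u n - l) < eps;
  alg_dense : forall (x : C) (eps : R), 0 < eps -> exists y : C,
    nrm (x - y) < eps /\
    exists p : {poly {poly F}},
      map_poly (fun c : {poly F} => (map_poly iota c).[theta]) p != 0 /\
      root (map_poly (fun c : {poly F} => (map_poly iota c).[theta]) p) y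
}.

(* Formal power series in z, t_1..t_s over C.  A series a is given by its
   coefficients: a i m = coefficient of z^i t^m (m a multi-index). *)
Section Series.
Variables (C : fieldType) (s : nat).

Definition midx := 'I_s -> nat.
Definition ser := nat -> midx -> C.

Definition ser0 : ser := fun _ _ => 0.
Definition ser1 : ser := fun i m => if (i == 0%N) && [forall j, m j == 0%N] then 1 else 0.
Definition sercst (c : C) : ser :=
  fun i m => if (i == 0%N) && [forall j, m j == 0%N] then c else 0.
Definition serz : ser := fun i m => if (i == 1%N) && [forall j, m j == 0%N] then 1 else 0.
Definition seradd (a b : ser) : ser := fun i m => a i m + b i m.
Definition seropp (a : ser) : ser := fun i m => - a i m.

Definition mbound (m : midx) : nat := (\sum_(j < s) m j)%N.

Definition sermul (a b : ser) : ser := fun i m =>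
  \sum_(k < i.+1)
    \sum_(mu : {ffun 'I_s -> 'I_(mbound m).+1} | [forall j, (mu j <= m j)%N])
      a k (fun j => nat_of_ord (mu j)) * b (i - k)%N (fun j => (m j - mu j)%N).

Definition tinv (a : ser) : ser := epsilon (inhabits ser0) (fun b => sermul a b = ser1).

End Series.
Arguments ser0 : clear implicits.
Arguments ser1 : clear implicits.
Arguments serz : clear implicits.
Arguments sercst {C} s c.

(* tau^{-1}: inverse of the q-Frobenius on C (bijective as C is algebraically
   closed of characteristic p), applied coefficientwise; twistinv k = tau^{-k}. *)
Definition frobinv (C : fieldType) (q : nat) (x : C) : C :=
  epsilon (inhabits 0) (fun y : C => y ^+ q = x).

Definition twistinv (C : fieldType) (s q k : nat) (a : ser C s) : ser C s :=
  fun i m => iter k (frobinv q) (a i m).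

Section Subrings.
Variables (C : fieldType) (R : realType) (nrm : C -> R) (s : nat).

Definition tate_coef (b : midx s -> C) : Prop :=
  forall eps : R, 0 < eps -> exists N : nat,
    forall m : midx s, (exists j, (N <= m j)%N) -> nrm (b m) < eps.

Definition in_T (a : ser C s) : Prop :=
  tate_coef (a 0%N) /\ forall i, i <> 0%N -> forall m, a i m = 0.

Definition in_Tz (q : nat) (a : ser C s) : Prop :=
  (forall i, tate_coef (a i)) /\
  forall eps : R, 0 < eps -> exists N : nat, forall i, (N <= i)%N ->
    forall m, (q%:R) ^+ i * nrm (a i m) <= eps.

Definition in_Tpolz (a : ser C s) : Prop :=
  (forall i, tate_coef (a i)) /\
  exists N : nat, forall i, (N <= i)%N -> forall m, a i m = 0.

End Subrings.

Definition in_Fqtz (F : finFieldType) (C : fieldType) (s : nat) (iota : F -> C)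
    (a : ser C s) : Prop :=
  (forall i m, exists c : F, a i m = iota c) /\
  exists N : nat, forall i (m : midx s), ((N <= i)%N \/ exists j, (N <= m j)%N) ->
    a i m = 0.

Section Matrices.
Variables (C : fieldType) (s r : nat).

Definition rowmul (g : 'I_r -> ser C s) (P : 'I_r -> 'I_r -> ser C s) : 'I_r -> ser C s :=
  fun j i m => \sum_(k < r) sermul (g k) (P k j) i m.

Definition matmul (P Q : 'I_r -> 'I_r -> ser C s) : 'I_r -> 'I_r -> ser C s :=
  fun a b i m => \sum_(k < r) sermul (P a k) (Q k b) i m.

Definition idm : 'I_r -> 'I_r -> ser C s := fun a b => if a == b then ser1 C s else ser0 C s.

Definition lincomb (c : 'I_r -> ser C s) (b : 'I_r -> 'I_r -> ser C s) : 'I_r -> ser C s :=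
  fun j i m => \sum_(k < r) sermul (c k) (b k j) i m.

Definition twistv (q k : nat) (g : 'I_r -> ser C s) : 'I_r -> ser C s :=
  fun j => twistinv q k (g j).
Definition twistm (q k : nat) (P : 'I_r -> 'I_r -> ser C s) : 'I_r -> 'I_r -> ser C s :=
  fun a b => twistinv q k (P a b).

(* The matrix Phi attached to phi_theta = theta + A_1 tau + ... + A_r tau^r
   (A k is A_k, for 1 <= k <= r).  Rows 0..r-2 (0-indexed) are the shifted
   standard basis vectors; the last row is
   [(z - theta)/A_r^(-r), -A_1^(-1)/A_r^(-r), ..., -A_(r-1)^(-r+1)/A_r^(-r)]. *)
Definition Phi (q : nat) (theta : C) (A : nat -> ser C s) : 'I_r -> 'I_r -> ser C s :=
  fun i j =>
    if (i.+1 < r)%N then (if (j == i.+1 :> nat) then ser1 C s else ser0 C s)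
    else
      let d := tinv (twistinv q r (A r)) in
      if (j == 0%N :> nat) then sermul (seradd (serz C s) (sercst s (- theta))) d
      else sermul (seropp (twistinv q j (A j))) d.

End Matrices.

Definition Vphi (C : fieldType) (R : realType) (nrm : C -> R) (s r q : nat)
    (theta : C) (A : nat -> ser C s) (g : 'I_r -> ser C s) : Prop :=
  (forall j, in_Tz nrm q (g j)) /\ rowmul (twistv q 1 g) (Phi q theta A) = g.

From HB Require Import structures.
From mathcomp Require Import all_boot all_order all_algebra finfield.
From mathcomp Require Import reals boolp zify.
From Stdlib Require Import ClassicalEpsilon.

Set Implicit Arguments.
Unset Strict Implicit.
Unset Printing Implicit Defensive.

Import Order.TTheory GRing.Theory Num.Theory.
Local Open Scope ring_scope.

(* Write g^(-1) for the coefficientwise inverse Frobenius twist of a row vector g.  Since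
   Psi^(-1) = Phi Psi, a row g satisfies g^(-1) Phi = g exactly when f = g Psi satisfies
   f^(-1) = f, i.e. when every coefficient of f lies in F_q.  An element of T_s{z/theta} with
   coefficients in F_q has finite support, because nonzero elements of F_q have absolute value
   1; this gives (a), and (b) follows as Psi is invertible.  For (c), compare z-coefficients in
   g = g^(-1) Phi: the last row of Phi carries z - theta times the unit 1/A_r^(-r), and the
   other rows shift the entries, so if all entries of g vanish in z-degree i + 1 they vanish in
   degree i; a polynomial solution therefore vanishes by descending induction on the degree. *)

(** * Power series in t_1, ..., t_s and z *)

Section MultiIndexBox.
Variable s : nat.
Local Notation midx := (midx s).
Local Notation box B := {ffun 'I_s -> 'I_B.+1}.

Definition box_val B (mu : box B) : midx := fun j => nat_of_ord (mu j).
Definition box_of B (m : midx) : box B := [ffun j => inord (m j)].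
Definition midx_bounded B (m : midx) := [forall j, (m j <= B)%N].
Definition midx_le (mu m : midx) := [forall j, (mu j <= m j)%N].
Definition midx_sub (m mu : midx) : midx := fun j => (m j - mu j)%N.
Definition midx_add (m mu : midx) : midx := fun j => (m j + mu j)%N.

Lemma box_ofK B m : midx_bounded B m -> box_val (box_of B m) = m.
Proof. by move=> /forallP Bm; apply: funext => j; rewrite /box_val ffunE inordK // ltnS. Qed.

Lemma box_valK B : cancel (@box_val B) (box_of B).
Proof. by move=> mu; apply/ffunP => j; rewrite ffunE /box_val inord_val. Qed.

Lemma box_val_bounded B mu : midx_bounded B (@box_val B mu).
Proof. by apply/forallP => j; rewrite /box_val -ltnS. Qed.

Lemma midx_le_bounded B mu m : midx_bounded B m -> midx_le mu m -> midx_bounded B mu.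
Proof.
by move=> /forallP Bm /forallP le_mu_m; apply/forallP => j; apply: leq_trans (le_mu_m j) (Bm j).
Qed.

Lemma midx_bounded_mbound m : midx_bounded (mbound m) m.
Proof. by apply/forallP => j; rewrite /mbound (bigD1 j) //= leq_addr. Qed.

Lemma midx_sub_bounded B m mu : midx_bounded B m -> midx_bounded B (midx_sub m mu).
Proof. by move=> /forallP Bm; apply/forallP => j; apply: leq_trans (leq_subr _ _) (Bm j). Qed.

Lemma box_reindex (V : nmodType) B1 B2 (P1 P2 : pred midx) (h h' : midx -> midx)
    (G : midx -> V) :
  (forall mu, midx_bounded B1 mu -> P1 mu ->
     [/\ P2 (h mu), h' (h mu) = mu & midx_bounded B2 (h mu)]) ->
  (forall nu, midx_bounded B2 nu -> P2 nu ->
     [/\ P1 (h' nu), h (h' nu) = nu & midx_bounded B1 (h' nu)]) ->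
  \sum_(mu : box B1 | P1 (box_val mu)) G (h (box_val mu)) =
  \sum_(nu : box B2 | P2 (box_val nu)) G (box_val nu).
Proof.
move=> hP h'P.
rewrite (reindex_onto (fun mu : box B1 => box_of B2 (h (box_val mu)))
                      (fun nu : box B2 => box_of B1 (h' (box_val nu)))) /=; last first.
  move=> nu Pnu; have [_ hh' bnd] := h'P _ (box_val_bounded nu) Pnu.
  by rewrite box_ofK // hh' box_valK.
apply: eq_big => [mu|mu Pmu]; last first.
  by have [_ _ bnd] := hP _ (box_val_bounded mu) Pmu; rewrite box_ofK.
apply/idP/andP => [Pmu|[Pmu /eqP Emu]].
  by have [P2h h'h bnd] := hP _ (box_val_bounded mu) Pmu; rewrite box_ofK // h'h box_valK P2h.
by have [P1h' _ bnd] := h'P _ (box_val_bounded _) Pmu; rewrite -Emu box_ofK.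
Qed.

End MultiIndexBox.

Section TSeriesRing.
Variables (C : fieldType) (s : nat).
Local Notation midx := (midx s).
Local Notation box B := {ffun 'I_s -> 'I_B.+1}.

Definition tseries := midx -> C.
HB.instance Definition _ := Choice.copy tseries (midx -> C).

Definition tmul (f g : tseries) : tseries := fun m =>
  \sum_(mu : box (mbound m) | [forall j, (mu j <= m j)%N])
    f (fun j => nat_of_ord (mu j)) * g (fun j => (m j - mu j)%N).

Lemma tmul_bounded B f g m : midx_bounded B m ->
  tmul f g m = \sum_(mu : box B | midx_le (box_val mu) m)
                 f (box_val mu) * g (midx_sub m (box_val mu)).
Proof.
move=> Bm; have := @box_reindex s C (mbound m) B (fun mu => midx_le mu m)
  (fun mu => midx_le mu m) id id (fun mu => f mu * g (midx_sub m mu)).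
apply=> mu _ le_mu_m.
  by split=> //; apply: midx_le_bounded le_mu_m.
by split=> //; apply: midx_le_bounded (midx_bounded_mbound m) le_mu_m.
Qed.

Lemma tmulC : commutative tmul.
Proof.
move=> f g; apply: funext => m; have Bm := midx_bounded_mbound m.
rewrite !(tmul_bounded _ _ Bm).
have sub_involutive mu : midx_le mu m ->
    [/\ midx_le (midx_sub m mu) m, midx_sub m (midx_sub m mu) = mu
      & midx_bounded (mbound m) (midx_sub m mu)].
  move=> /forallP le_mu_m; split; last exact: midx_sub_bounded.
    by apply/forallP => j; apply: leq_subr.
  by apply: funext => j; rewrite /midx_sub subKn.
rewrite -(@box_reindex _ _ (mbound m) (mbound m) (fun mu => midx_le mu m) (fun mu => midx_le mu m)
           (midx_sub m) (midx_sub m) (fun mu => g mu * f (midx_sub m mu)));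
  [|by move=> mu _ /sub_involutive..].
apply: eq_bigr => mu le_mu_m; rewrite mulrC.
by have [_ -> _] := sub_involutive _ le_mu_m.
Qed.

Lemma tmulA : associative tmul.
Proof.
move=> f g h; apply: funext => m; apply/esym; set M := mbound m.
have BM := midx_bounded_mbound m.
rewrite !(tmul_bounded _ _ BM).
under eq_bigr => mu le_mu_m.
  rewrite (tmul_bounded _ _ (midx_le_bounded BM le_mu_m)) mulr_suml; over.
under [RHS]eq_bigr => nu _.
  rewrite (tmul_bounded _ _ (midx_sub_bounded _ BM)) mulr_sumr; over.
rewrite /= (exchange_big_dep (fun nu : box M => midx_le (box_val nu) m)) /=; last first.
  move=> mu nu /forallP le_mu_m /forallP le_nu_mu.
  by apply/forallP => j; apply: leq_trans (le_nu_mu j) (le_mu_m j).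
apply: eq_bigr => nu /forallP le_nu_m.
rewrite -(@box_reindex _ _ M M (fun rho => midx_le rho (midx_sub m (box_val nu)))
   (fun mu => midx_le mu m && midx_le (box_val nu) mu)
   (midx_add (box_val nu)) (fun mu => midx_sub mu (box_val nu))
   (fun mu => f (box_val nu) * g (midx_sub mu (box_val nu)) * h (midx_sub m mu))).
- apply: eq_bigr => rho _; rewrite -mulrA /midx_sub /midx_add.
  by congr (_ * (g _ * h _)); apply: funext => j; rewrite ?addKn ?subnDA.
- move=> rho _ /forallP; rewrite /midx_sub /midx_add => le_rho; split.
  + by apply/andP; split; apply/forallP => j; move: (le_rho j) (le_nu_m j); lia.
  + by apply: funext => j; rewrite addKn.
  + by apply/forallP => j; move/forallP: BM => /(_ j); move: (le_rho j) (le_nu_m j); lia.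
- move=> mu _ /andP[/forallP le_mu_m /forallP le_nu_mu]; split; rewrite /midx_sub /midx_add.
  + by apply/forallP => j; move: (le_mu_m j) (le_nu_mu j); lia.
  + by apply: funext => j; move: (le_nu_mu j); lia.
  + by apply/forallP => j; move/forallP: BM => /(_ j); move: (le_mu_m j); lia.
Qed.

Definition tone : tseries := fun m => if [forall j, m j == 0%N] then 1 else 0.

Lemma tmul1 : left_id tone tmul.
Proof.
move=> f; apply: funext => m; rewrite (tmul_bounded _ _ (midx_bounded_mbound m)).
have B0 : midx_bounded (mbound m) (fun _ : 'I_s => 0%N) by apply/forallP.
rewrite (bigD1 (box_of _ (fun _ : 'I_s => 0%N))) /= ?box_ofK //.
rewrite big1 ?addr0 /tone.
  rewrite ifT; last by apply/forallP.
  by rewrite mul1r; congr f; apply: funext => j; rewrite /midx_sub subn0.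
move=> mu /andP[_ mu_neq0]; rewrite /tone; case: ifPn => [/forallP mu0|]; last by rewrite mul0r.
case/eqP: mu_neq0; rewrite -[mu]box_valK; congr box_of.
by apply: funext => j; apply/eqP.
Qed.

Lemma tmulDl : left_distributive tmul (fun f g m => f m + g m).
Proof.
by move=> f g h; apply: funext => m; rewrite /tmul -big_split; apply: eq_bigr => *; rewrite mulrDl.
Qed.

Lemma tone_neq0 : tone != (fun _ => 0).
Proof.
apply/eqP => /(congr1 (fun f => f (fun _ => 0%N))) /eqP.
by rewrite /tone ifT ?oner_eq0 //; apply/forallP.
Qed.

HB.instance Definition _ := GRing.isZmodule.Build tseries
  (fun f g h => funext (fun m => addrA (f m) (g m) (h m)))
  (fun f g => funext (fun m => addrC (f m) (g m)))
  (fun f => funext (fun m => add0r (f m)))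
  (fun f => funext (fun m => addNr (f m))).

HB.instance Definition _ :=
  GRing.Zmodule_isComNzRing.Build tseries tmulA tmulC tmul1 tmulDl tone_neq0.

Lemma tseries_sumE (I : Type) (rr : seq I) (P : pred I) (F : I -> tseries) m :
  (\sum_(i <- rr | P i) F i) m = \sum_(i <- rr | P i) F i m.
Proof. exact: (big_morph (fun f : tseries => f m)). Qed.

End TSeriesRing.

Section SeriesRing.
Variables (C : fieldType) (s : nat).
Local Notation T := (tseries C s).
Local Notation S := (ser C s).

HB.instance Definition _ := Choice.copy S (nat -> T).

Lemma sermulE (a b : S) i : sermul a b i = \sum_(k < i.+1) (a k : T) * b (i - k)%N.
Proof. by apply: funext => m; rewrite tseries_sumE; apply: eq_bigr. Qed.

(* The [z^i]-coefficient of a product only involves the first [i + 1] coefficients of the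
   factors, so it can be read off a product of polynomials over the t-series ring. *)
Lemma sermul_coef (a b : S) (pa pb : {poly T}) i :
  (forall k, (k <= i)%N -> pa`_k = a k) -> (forall k, (k <= i)%N -> pb`_k = b k) ->
  sermul a b i = (pa * pb)`_i.
Proof.
move=> Ea Eb; rewrite sermulE coefM; apply: eq_bigr => k _.
have le_ki : (k <= i)%N by rewrite -ltnS.
by rewrite Ea ?Eb ?leq_subr.
Qed.

Definition ztrunc n (a : S) : {poly T} := \poly_(k < n.+1) (a k : T).

Lemma ztrunc_coef n a k : (k <= n)%N -> (ztrunc n a)`_k = a k.
Proof. by move=> le_kn; rewrite coef_poly ltnS le_kn. Qed.

Lemma sermul_ztrunc_coef n (a b : S) i :
  (i <= n)%N -> (ztrunc n a * ztrunc n b)`_i = sermul a b i.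
Proof.
by move=> le_in; apply/esym/sermul_coef => k le_ki; apply: ztrunc_coef (leq_trans le_ki le_in).
Qed.

Lemma sermulA : associative (@sermul C s).
Proof.
move=> a b c; apply: funext => i.
rewrite (sermul_coef (@ztrunc_coef i a) (@sermul_ztrunc_coef i b c)).
by rewrite (sermul_coef (@sermul_ztrunc_coef i a b) (@ztrunc_coef i c)) mulrA.
Qed.

Lemma sermulC : commutative (@sermul C s).
Proof.
move=> a b; apply: funext => i.
by rewrite (sermul_coef (@ztrunc_coef i a) (@ztrunc_coef i b)) mulrC
  (sermul_coef (@ztrunc_coef i b) (@ztrunc_coef i a)).
Qed.

Lemma sermul1 : left_id (ser1 C s) (@sermul C s).
Proof.
move=> a; apply: funext => i.
rewrite (sermul_coef (pa:=1) _ (@ztrunc_coef i a)) => [|k _].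
  by rewrite mul1r ztrunc_coef.
by rewrite coefC; case: k.
Qed.

Lemma sermulDl : left_distributive (@sermul C s) (@seradd C s).
Proof.
move=> a b c; apply: funext => i.
rewrite (sermul_coef (pa:=ztrunc i a + ztrunc i b) _ (@ztrunc_coef i c)) => [|k le_ki].
  by rewrite mulrDl coefD !sermul_ztrunc_coef.
by rewrite coefD !ztrunc_coef.
Qed.

Lemma ser1_neq0 : ser1 C s != ser0 C s.
Proof.
apply/eqP => /(congr1 (fun a : S => a 0%N (fun _ => 0%N))) /eqP.
by rewrite /ser1 /ser0 ifT ?oner_eq0 //; apply/forallP.
Qed.

HB.instance Definition _ := GRing.isZmodule.Build S
  (fun a b c => funext (fun i => addrA (a i : T) (b i) (c i)))
  (fun a b => funext (fun i => addrC (a i : T) (b i)))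
  (fun a => funext (fun i => add0r (a i : T)))
  (fun a => funext (fun i => addNr (a i : T))).

HB.instance Definition _ :=
  GRing.Zmodule_isComNzRing.Build S sermulA sermulC sermul1 sermulDl ser1_neq0.

End SeriesRing.

Lemma ser_mulE (C : fieldType) s (a b : ser C s) : sermul a b = a * b.
Proof. by []. Qed.

(** * The inverse Frobenius twist *)

Section FrobeniusInverse.
Variables (F : finFieldType) (C : closedFieldType) (iota : {rmorphism F -> C}).
Local Notation q := #|F|.

Lemma pchar_card_nat : [pchar C].-nat q.
Proof.
have [p p_prime pF] := finPcharP F.
by rewrite (card_pprimeChar pF) pnatX pnatE ?(rmorph_pchar iota pF).
Qed.

Let q_gt0 : (0 < q)%N := ltnW (finNzRing_gt1 F).

Lemma frobinvK (x : C) : frobinv q x ^+ q = x.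
Proof.
apply: (epsilon_spec (inhabits 0) (fun y : C => y ^+ q = x)).
have [y y_root] := @solve_monicpoly C q (fun i => if i == 0%N then x else 0) q_gt0.
exists y; rewrite y_root (bigD1 (Ordinal q_gt0)) //= big1 ?addr0 ?mulr1 // => i /negPf.
by rewrite -val_eqE /= => ->; rewrite mul0r.
Qed.

Lemma frobB (x y : C) : (x - y) ^+ q = x ^+ q - y ^+ q.
Proof. by rewrite exprDn_pchar ?exprNn_pchar ?pchar_card_nat. Qed.

Lemma frob_inj : injective (fun x : C => x ^+ q).
Proof.
move=> x y /= /eqP; rewrite -subr_eq0 -frobB expf_eq0 subr_eq0.
by case/andP=> _ /eqP.
Qed.

Lemma frobinv_eq (x y : C) : y ^+ q = x -> frobinv q x = y.
Proof. by move=> yx; apply: frob_inj; rewrite /= frobinvK. Qed.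

Lemma frobinvB : zmod_morphism (frobinv (C:=C) q).
Proof. by move=> x y; apply: frobinv_eq; rewrite frobB !frobinvK. Qed.

Lemma frobinv_monoid : monoid_morphism (frobinv (C:=C) q).
Proof.
by split=> [|x y]; apply: frobinv_eq; rewrite ?expr1n // exprMn !frobinvK.
Qed.

Definition frobinv_rmorph : {rmorphism C -> C} :=
  HB.pack (frobinv (C:=C) q) (GRing.isZmodMorphism.Build _ _ _ frobinvB)
          (GRing.isMonoidMorphism.Build _ _ _ frobinv_monoid).

Lemma frobinv_iota c : frobinv q (iota c) = iota c.
Proof. by apply: frobinv_eq; rewrite -rmorphXn expf_card. Qed.

Lemma frobinv_fixed x : frobinv q x = x -> exists c, x = iota c.
Proof.
move=> fix_x; have xq : x ^+ q = x by rewrite -{1}fix_x frobinvK.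
have : root (map_poly iota ('X^q - 'X)) x.
  by rewrite rmorphB /= map_polyXn map_polyX rootE !hornerE xq subrr.
rewrite finField_genPoly rmorph_prod /= rootE horner_prod => /prodf_eq0 [c _].
by rewrite rmorphB /= map_polyX map_polyC hornerXsubC subr_eq0 => /eqP ->; exists c.
Qed.

End FrobeniusInverse.

Section IteratedMorphism.
Variables (R : pzRingType) (f : {rmorphism R -> R}).

Lemma iter_zmod_morphism k : zmod_morphism (iter k f).
Proof. by elim: k => [|k IHk] x y; rewrite ?iterS ?IHk ?rmorphB. Qed.

Lemma iter_monoid_morphism k : monoid_morphism (iter k f).
Proof.
elim: k => [|k [IH1 IHM]]; first by [].
by split=> [|x y]; rewrite iterS ?IH1 ?IHM (rmorph1, rmorphM).
Qed.

Definition iter_rmorph k : {rmorphism R -> R} :=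
  HB.pack (iter k f) (GRing.isZmodMorphism.Build _ _ _ (iter_zmod_morphism k))
          (GRing.isMonoidMorphism.Build _ _ _ (iter_monoid_morphism k)).

End IteratedMorphism.

Section CoefficientMap.
Variables (C : fieldType) (s : nat) (f : {rmorphism C -> C}).

Definition ser_map (a : ser C s) : ser C s := fun i m => f (a i m).

Lemma ser_map_zmod_morphism : zmod_morphism ser_map.
Proof. by move=> a b; do 2!apply: funext => ?; rewrite /ser_map /= /seradd /seropp rmorphB. Qed.

Lemma ser_map_monoid_morphism : monoid_morphism ser_map.
Proof.
split=> [|a b]; apply: funext => i; apply: funext => m; rewrite /ser_map.
  change (f (ser1 C s i m) = ser1 C s i m).
  by rewrite /ser1; case: ifP => _; rewrite ?rmorph1 ?rmorph0.
change (f (sermul a b i m) = sermul (ser_map a) (ser_map b) i m).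
by rewrite /sermul rmorph_sum; apply: eq_bigr => k _; rewrite rmorph_sum;
   apply: eq_bigr => mu _; rewrite rmorphM.
Qed.

Definition ser_rmorph : {rmorphism ser C s -> ser C s} :=
  HB.pack ser_map (GRing.isZmodMorphism.Build _ _ _ ser_map_zmod_morphism)
          (GRing.isMonoidMorphism.Build _ _ _ ser_map_monoid_morphism).

End CoefficientMap.

Definition twist (F : finFieldType) (C : closedFieldType) (iota : {rmorphism F -> C}) s k :
    {rmorphism ser C s -> ser C s} :=
  ser_rmorph s (iter_rmorph (frobinv_rmorph iota) k).


Section SeriesMatrices.
Variables (C : fieldType) (s r : nat).
Local Notation S := (ser C s).

Definition mx_of (P : 'I_r -> 'I_r -> S) : 'M[S]_r := \matrix_(i, j) P i j.
Definition rv_of (g : 'I_r -> S) : 'rV[S]_r := \row_j g j.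

Lemma rv_of_inj : injective rv_of.
Proof. by move=> g h /rowP gh; apply: funext => j; have := gh j; rewrite !mxE. Qed.

Lemma ser_sum_apply (I : Type) (rr : seq I) (P : pred I) (G : I -> S) i m :
  (\sum_(k <- rr | P k) G k) i m = \sum_(k <- rr | P k) G k i m.
Proof. exact: (big_morph (fun a : S => a i m)). Qed.

Lemma rowmulE (g : 'I_r -> S) (P : 'I_r -> 'I_r -> S) j :
  rowmul g P j = \sum_(k < r) g k * P k j.
Proof. by do 2!apply: funext => ?; rewrite ser_sum_apply. Qed.

Lemma mx_of_matmul P Q : mx_of (matmul P Q) = mx_of P *m mx_of Q.
Proof.
apply/matrixP => a b; rewrite !mxE; do 2!apply: funext => ?.
by rewrite ser_sum_apply; apply: eq_bigr => k _; rewrite !mxE.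
Qed.

Lemma rv_of_rowmul g P : rv_of (rowmul g P) = rv_of g *m mx_of P.
Proof.
apply/rowP => j; rewrite !mxE; do 2!apply: funext => ?.
by rewrite ser_sum_apply; apply: eq_bigr => k _; rewrite !mxE.
Qed.

Lemma mx_of_idm : mx_of (@idm C s r) = 1%:M.
Proof. by apply/matrixP => a b; rewrite !mxE /idm; case: eqP. Qed.

Lemma mx_of_map (f : {rmorphism S -> S}) P : mx_of (fun a b => f (P a b)) = map_mx f (mx_of P).
Proof. by apply/matrixP => a b; rewrite !mxE. Qed.

Lemma rv_of_map (f : {rmorphism S -> S}) g : rv_of (fun j => f (g j)) = map_mx f (rv_of g).
Proof. by apply/rowP => j; rewrite !mxE. Qed.

Lemma rowmul_matmul (g : 'I_r -> S) (P Q : 'I_r -> 'I_r -> S) :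
  rowmul (rowmul g P) Q = rowmul g (matmul P Q).
Proof. by apply: rv_of_inj; rewrite !rv_of_rowmul mx_of_matmul mulmxA. Qed.

Lemma rowmul_idm (g : 'I_r -> S) : rowmul g (@idm C s r) = g.
Proof. by apply: rv_of_inj; rewrite rv_of_rowmul mx_of_idm mulmx1. Qed.

End SeriesMatrices.

Section TwistedFixedRows.
Variables (R : comNzRingType) (sigma : {rmorphism R -> R}) (n : nat).
Variables (Phi Psi Psi' : 'M[R]_n).
Hypotheses (Psi_inv : Psi *m Psi' = 1%:M) (Psi_frob : map_mx sigma Psi = Phi *m Psi).

Lemma twisted_fixed_rowP (g : 'rV[R]_n) :
  map_mx sigma g *m Phi = g <-> map_mx sigma (g *m Psi) = g *m Psi.
Proof.
rewrite map_mxM Psi_frob mulmxA; split=> [-> //|fix_gPsi].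
by rewrite -[LHS]mulmx1 -Psi_inv mulmxA fix_gPsi -mulmxA Psi_inv mulmx1.
Qed.

End TwistedFixedRows.

(** * Convergence conditions *)

Lemma fin_nat_bound (I : finType) (P : I -> nat -> Prop) :
  (forall i N N', (N <= N')%N -> P i N -> P i N') ->
  (forall i, exists N, P i N) -> exists N, forall i, P i N.
Proof.
move=> P_mono exP; have [N PN] := fin_all_exists exP.
by exists (\max_i N i)%N => i; apply: P_mono (PN i); apply: leq_bigmax.
Qed.

Lemma fin_real_bound (R : realDomainType) (I : finType) (P : I -> R -> Prop) :
  (forall i K K', K <= K' -> P i K -> P i K') ->
  (forall i, exists K, P i K) -> exists2 K, 0 <= K & forall i, P i K.
Proof.
move=> P_mono exP; have [K PK] := fin_all_exists exP.
exists (\sum_i `|K i|) => [|i]; first by apply: sumr_ge0.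
apply: P_mono (PK i); rewrite (bigD1 i) //= (le_trans (ler_norm _)) // lerDl.
by rewrite sumr_ge0.
Qed.

Section UltrametricSeries.
Variables (C : fieldType) (R : realType) (nrm : C -> R) (s q : nat).
Hypotheses (ge0_nrm : forall x, 0 <= nrm x) (nrm_zero : nrm 0 = 0).
Hypothesis nrm_mul : forall x y, nrm (x * y) = nrm x * nrm y.
Hypothesis nrm_max : forall x y, nrm (x + y) <= Num.max (nrm x) (nrm y).
Hypothesis q_gt0 : (0 < q)%N.
Local Notation T := (tseries C s).
Local Notation S := (ser C s).
Local Notation qR := (q%:R : R).

Lemma nrm_sum_le (I : Type) (rr : seq I) (P : pred I) (G : I -> C) (e : R) :
  0 <= e -> (forall i, P i -> nrm (G i) <= e) -> nrm (\sum_(i <- rr | P i) G i) <= e.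
Proof.
move=> e_ge0 GP; apply: (big_ind (fun x => nrm x <= e)); rewrite ?nrm_zero // => x y nx ny.
by rewrite (le_trans (nrm_max x y)) // ge_max nx ny.
Qed.

Lemma nrm_sum_lt (I : Type) (rr : seq I) (P : pred I) (G : I -> C) (e : R) :
  0 < e -> (forall i, P i -> nrm (G i) < e) -> nrm (\sum_(i <- rr | P i) G i) < e.
Proof.
move=> e_gt0 GP; apply: (big_ind (fun x => nrm x < e)); rewrite ?nrm_zero // => x y nx ny.
by rewrite (le_lt_trans (nrm_max x y)) // gt_max nx ny.
Qed.

Lemma tate_coef_bounded (b : T) : tate_coef nrm b -> exists2 K, 0 <= K & forall m, nrm (b m) <= K.
Proof.
move=> /(_ 1 ltr01) [N bN].
exists (1 + \sum_(mu : {ffun 'I_s -> 'I_N.+1}) nrm (b (box_val mu))) => [|m].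
  by rewrite addr_ge0 ?sumr_ge0.
have [Bm|] := boolP (midx_bounded N m).
  rewrite -(box_ofK Bm) (bigD1 (box_of N m)) //= addrCA lerDl addr_ge0 ?sumr_ge0 //.
rewrite negb_forall => /existsP [j]; rewrite -ltnNge => /ltnW Nj.
by rewrite (le_trans (ltW (bN m _))) ?lerDl ?sumr_ge0 //; exists j.
Qed.

Lemma tate_coefD (f g : T) : tate_coef nrm f -> tate_coef nrm g -> tate_coef nrm (f + g).
Proof.
move=> tf tg e e_gt0; have [Nf fN] := tf e e_gt0; have [Ng gN] := tg e e_gt0.
exists (maxn Nf Ng) => m [j Nj]; rewrite (le_lt_trans (nrm_max _ _)) // gt_max.
by rewrite fN ?gN //; exists j; rewrite (leq_trans _ Nj) ?leq_maxl ?leq_maxr.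
Qed.

Lemma tate_coefM (f g : T) : tate_coef nrm f -> tate_coef nrm g -> tate_coef nrm (f * g).
Proof.
move=> tf tg; have [Kf Kf_ge0 fK] := tate_coef_bounded tf.
have [Kg Kg_ge0 gK] := tate_coef_bounded tg.
pose K := Kf + Kg + 1; have K_gt0 : 0 < K by rewrite ltr_wpDl ?addr_ge0.
have fK' x : nrm (f x) <= K by rewrite (le_trans (fK x)) // /K -addrA lerDl addr_ge0.
have gK' x : nrm (g x) <= K by rewrite (le_trans (gK x)) // /K addrAC lerDr addr_ge0.
move=> e e_gt0; have eK_gt0 : 0 < e / K by rewrite divr_gt0.
have [Nf fN] := tf _ eK_gt0; have [Ng gN] := tg _ eK_gt0.
exists (Nf + Ng)%N => m [j Nj]; apply: nrm_sum_lt => // mu _; rewrite nrm_mul.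
have [Nf_mu|mu_lt] := leqP Nf (mu j).
  have := fN (fun j => nat_of_ord (mu j)) (ex_intro _ j Nf_mu).
  by rewrite ltr_pdivlMr // => /(le_lt_trans _); apply; rewrite ler_wpM2l.
have Ng_mu : (Ng <= m j - mu j)%N by lia.
have := gN (fun j => (m j - mu j)%N) (ex_intro _ j Ng_mu).
by rewrite ltr_pdivlMr // => /(le_lt_trans _); apply; rewrite mulrC ler_wpM2l.
Qed.

Lemma tate_coef_sum (I : Type) (rr : seq I) (P : pred I) (G : I -> T) :
  (forall i, P i -> tate_coef nrm (G i)) -> tate_coef nrm (\sum_(i <- rr | P i) G i).
Proof.
move=> tG; apply: (big_ind (fun f : T => tate_coef nrm f)) => //; last exact: tate_coefD.
by move=> e e_gt0; exists 0%N => m _; rewrite nrm_zero.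
Qed.

Lemma qX_gt0 i : 0 < qR ^+ i. Proof. by rewrite exprn_gt0 ?ltr0n. Qed.

Lemma in_Tz_bounded (a : S) : in_Tz nrm q a ->
  exists2 M, 0 < M & forall i m, qR ^+ i * nrm (a i m) <= M.
Proof.
move=> [ta /(_ 1 ltr01) [N aN]].
have [K K_ge0 aK] : exists2 K, 0 <= K & forall (i : 'I_N) m, qR ^+ i * nrm (a i m) <= K.
  apply: (fin_real_bound (P := fun (i : 'I_N) K => forall m, qR ^+ i * nrm (a i m) <= K)).
    by move=> i K K' le_KK' aK m; apply: le_trans le_KK'.
  move=> i; have [K' _ aK'] := tate_coef_bounded (ta i).
  by exists (qR ^+ i * K') => m; rewrite ler_wpM2l ?(ltW (qX_gt0 i)).
exists (K + 1) => [|i m]; first by rewrite ltr_wpDl.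
have [lt_iN|le_Ni] := ltnP i N; last by rewrite (le_trans (aN i le_Ni m)) ?lerDr.
by rewrite (le_trans (aK (Ordinal lt_iN) m)) ?lerDl.
Qed.

Lemma in_TzD (a b : S) : in_Tz nrm q a -> in_Tz nrm q b -> in_Tz nrm q (a + b).
Proof.
move=> [ta za] [tb zb]; split=> [i|e e_gt0]; first exact: tate_coefD.
have [Na aN] := za _ e_gt0; have [Nb bN] := zb _ e_gt0.
exists (maxn Na Nb) => i le_i m; rewrite mulrC -ler_pdivlMr ?qX_gt0 //.
rewrite (le_trans (nrm_max _ _)) // ge_max !ler_pdivlMr ?qX_gt0 // ![_ * qR ^+ i]mulrC.
by rewrite aN ?bN // (leq_trans _ le_i) ?leq_maxl ?leq_maxr.
Qed.

Lemma in_TzM (a b : S) : in_Tz nrm q a -> in_Tz nrm q b -> in_Tz nrm q (a * b).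
Proof.
move=> Ta Tb; have [ta za] := Ta; have [tb zb] := Tb; rewrite -ser_mulE; split.
  by move=> i; rewrite sermulE; apply: tate_coef_sum => k _; apply: tate_coefM.
have [Ma Ma_gt0 aM] := in_Tz_bounded Ta; have [Mb Mb_gt0 bM] := in_Tz_bounded Tb.
pose M := Ma + Mb; have M_gt0 : 0 < M by rewrite addr_gt0.
move=> e e_gt0; have eM_gt0 : 0 < e / M by rewrite divr_gt0.
have [Na aN] := za _ eM_gt0; have [Nb bN] := zb _ eM_gt0.
exists (Na + Nb)%N => i le_i m; rewrite mulrC -ler_pdivlMr ?qX_gt0 //.
apply: nrm_sum_le => [|k _]; first by rewrite divr_ge0 ?ltW ?qX_gt0.
apply: nrm_sum_le => [|mu _]; first by rewrite divr_ge0 ?ltW ?qX_gt0.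
have qXE : qR ^+ i = qR ^+ k * qR ^+ (i - k) by rewrite -exprD subnKC // -ltnS.
rewrite nrm_mul ler_pdivlMr ?qX_gt0 // qXE.
rewrite mulrACA [nrm (a _ _) * _]mulrC [nrm (b _ _) * _]mulrC -(divfK (lt0r_neq0 M_gt0) e).
have [le_Nak|lt_kNa] := leqP Na k.
  by rewrite ler_pM ?mulr_ge0 ?ler0n ?exprn_ge0 ?aN // (le_trans (bM _ _)) ?lerDr ?ltW.
rewrite [X in _ <= X]mulrC ler_pM ?mulr_ge0 ?ler0n ?exprn_ge0 //.
  by rewrite (le_trans (aM _ _)) ?lerDl ?ltW.
by rewrite bN //; lia.
Qed.

Lemma in_Tz_finite (a : S) :
  (exists N, forall i (m : midx s), ((N <= i)%N \/ exists j, (N <= m j)%N) -> a i m = 0) ->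
  in_Tz nrm q a.
Proof.
move=> [N aN]; split=> [i e e_gt0|e e_gt0]; exists N.
  by move=> m Nm; rewrite aN ?nrm_zero //; right.
by move=> i Ni m; rewrite aN ?nrm_zero ?mulr0 ?ltW //; left.
Qed.

Lemma in_Tz_sum (I : Type) (rr : seq I) (P : pred I) (G : I -> S) :
  (forall i, P i -> in_Tz nrm q (G i)) -> in_Tz nrm q (\sum_(i <- rr | P i) G i).
Proof.
move=> TG; apply: (big_ind (fun a : S => in_Tz nrm q a)) => //; last exact: in_TzD.
by apply: in_Tz_finite; exists 0%N.
Qed.

Lemma in_Tz_rowmul r (g : 'I_r -> S) (P : 'I_r -> 'I_r -> S) :
  (forall k, in_Tz nrm q (g k)) -> (forall k j, in_Tz nrm q (P k j)) ->
  forall j, in_Tz nrm q (rowmul g P j).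
Proof. by move=> Tg TP j; rewrite rowmulE; apply: in_Tz_sum => k _; apply: in_TzM. Qed.

End UltrametricSeries.

(** * Solutions that are polynomial in z *)

Section ZCoefficients.
Variables (C : fieldType) (s : nat).
Local Notation T := (tseries C s).
Local Notation S := (ser C s).

Definition zconst (a : S) := forall i, i <> 0%N -> forall m, a i m = 0.

Lemma ser_coef_zconst (a : S) i : zconst a -> i != 0%N -> a i = 0 :> T.
Proof. by move=> za /eqP i_neq0; apply: funext; apply: za. Qed.

Lemma ser_coefD (a b : S) i : (a + b) i = (a i : T) + b i :> T.
Proof. by []. Qed.

Lemma ser_coefM_zconst (a b : S) i : zconst b -> (a * b) i = (a i : T) * b 0%N :> T.
Proof.
move=> zb; rewrite -ser_mulE sermulE big_ord_recr /= subnn big1 ?add0r // => k _.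
by rewrite (ser_coef_zconst zb) ?mulr0 // subn_eq0 -ltnNge.
Qed.

Lemma zconstM (a b : S) : zconst a -> zconst b -> zconst (a * b).
Proof.
move=> za zb i /eqP i_neq0 m.
by rewrite -[LHS]/(((a * b) i : T) m) ser_coefM_zconst // (ser_coef_zconst za) // mul0r.
Qed.

Lemma zconstN (a : S) : zconst a -> zconst (- a).
Proof. by move=> za i i_neq0 m; rewrite -[LHS]/(- a i m) za ?oppr0. Qed.

Lemma zconst_cst c : zconst (sercst s c).
Proof. by move=> [|i] // _ m. Qed.

Lemma ser_coefMz (a : S) i : (a * serz C s) i.+1 = a i :> T.
Proof.
rewrite mulrC -ser_mulE sermulE !big_ord_recl /= big1 ?addr0.
  by rewrite subn1 [serz C s 0%N]/= [serz C s 1%N]/= mul0r add0r mul1r.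
move=> k _; have -> : serz C s (bump 0 (bump 0 k)) = 0 :> T by apply: funext.
by rewrite mul0r.
Qed.

End ZCoefficients.

Lemma nat_down_ind (P : nat -> Prop) N :
  (forall i, (N <= i)%N -> P i) -> (forall i, P i.+1 -> P i) -> forall i, P i.
Proof.
move=> PN Pstep; suff P_add n i : (N <= i + n)%N -> P i.
  by move=> i; apply: (P_add N); rewrite leq_addl.
elim: n i => [|n IHn] i le_N; first by apply: PN; rewrite addn0 in le_N.
by apply/Pstep/IHn; rewrite addSnnS.
Qed.

Section TwistCoefficients.
Variables (F : finFieldType) (C : closedFieldType) (iota : {rmorphism F -> C}) (s k : nat).
Local Notation T := (tseries C s).
Local Notation tw := (twist iota s k).

Lemma twist_zconst a : zconst a -> zconst (tw a).
Proof.
by move=> za i i_neq0 m; rewrite -[LHS]/(iter_rmorph (frobinv_rmorph iota) k (a i m)) za ?rmorph0.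
Qed.

Lemma twist_coef_eq0 a i : tw a i = 0 :> T <-> a i = 0 :> T.
Proof.
have twE m : tw a i m = iter_rmorph (frobinv_rmorph iota) k (a i m) by [].
split=> a0; apply: funext => m.
  have : tw a i m = 0 by rewrite [LHS](congr1 (fun b : T => b m) a0).
  by rewrite twE -(rmorph0 (iter_rmorph (frobinv_rmorph iota) k)) => /fmorph_inj.
have : a i m = 0 by rewrite [LHS](congr1 (fun b : T => b m) a0).
by rewrite twE => ->; rewrite rmorph0.
Qed.

End TwistCoefficients.

Section NoPolynomialSolution.
Variables (F : finFieldType) (C : closedFieldType) (iota : {rmorphism F -> C}) (theta : C).
Variables (s r : nat) (A : nat -> ser C s).
Hypothesis r_gt0 : (0 < r)%N.
Hypothesis A_zconst : forall k, (1 <= k <= r)%N -> zconst (A k).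
Hypothesis Ar_unit : exists2 B, zconst B & A r * B = 1.
Local Notation q := #|F|.
Local Notation S := (ser C s).
Local Notation T := (tseries C s).
Local Notation tw k := (twist iota s k).
Local Notation Ph := (Phi (r:=r) q theta A).

Let lr_lt : (r.-1 < r)%N. Proof. by rewrite ltn_predL. Qed.
Let lr : 'I_r := Ordinal lr_lt.
Let d : S := tinv (twistinv q r (A r)).

Lemma Phi_lastE j :
  Ph lr j = if j == 0%N :> nat then (serz C s + sercst s (- theta)) * d else - tw j (A j) * d.
Proof. by rewrite /Phi ifF //= prednK // ltnn. Qed.

Lemma Phi_shiftE (k j : 'I_r) : k != lr -> Ph k j = (j == k.+1 :> nat)%:R.
Proof.
move=> /eqP k_neq_lr; rewrite /Phi ifT; first by case: eqP.
have k_neq : nat_of_ord k <> r.-1 by move=> kE; apply: k_neq_lr; apply: val_inj.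
by move: (ltn_ord k) k_neq; lia.
Qed.

Lemma twist_Ar_inv : zconst d /\ (tw r (A r) 0%N : T) * d 0%N = 1.
Proof.
have [B zB ArB] := Ar_unit.
have ArB' : tw r (A r) * tw r B = 1 by rewrite -rmorphM ArB rmorph1.
have Ad : tw r (A r) * d = 1.
  (* [tinv] is defined by choice; it yields an inverse as soon as one exists. *)
  apply: (epsilon_spec (inhabits (ser0 C s)) (fun b => sermul (twistinv q r (A r)) b = ser1 C s)).
  by exists (tw r B).
have dE : d = tw r B by rewrite -[d]mul1r -ArB' mulrAC Ad mul1r.
have zd : zconst d by rewrite dE; apply: twist_zconst.
by split=> //; rewrite -ser_coefM_zconst // Ad.
Qed.

Section Solution.
Variable g : 'I_r -> S.
Hypothesis g_fixed : rowmul (twistv q 1 g) Ph = g.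
Local Notation w k := (tw 1 (g k)).

Let j0 : 'I_r := Ordinal r_gt0.

Lemma Phi_fixed_first : g j0 = w lr * ((serz C s + sercst s (- theta)) * d).
Proof.
rewrite -{1}g_fixed rowmulE (bigD1 lr) //= big1 ?addr0 ?Phi_lastE // => k k_neq_lr.
by rewrite Phi_shiftE // mulr0.
Qed.

Lemma Phi_fixed_next (j k : 'I_r) : val j = k.+1 -> g j = w k + w lr * (- tw j (A j) * d).
Proof.
move=> jE; have k_neq_lr : k != lr.
  by apply/eqP => kE; move: (ltn_ord j); rewrite jE kE /= prednK // ltnn.
rewrite -{1}g_fixed rowmulE (bigD1 lr) //= (bigD1 k) //= Phi_lastE Phi_shiftE // jE.
rewrite eqxx mulr1 big1 ?addr0 1?addrC // => k' /andP[k'_neq_lr k'_neq_k].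
rewrite Phi_shiftE // jE eqSS (_ : (k == k' :> nat) = false) ?mulr0 //.
by apply: contraNF k'_neq_k => /eqP kk'; apply/eqP/val_inj.
Qed.

Lemma Phi_fixed_last_coef i : (forall j, g j i.+1 = 0 :> T) -> g lr i = 0 :> T.
Proof.
move=> gi1; have [zd Ad0] := twist_Ar_inv.
have : g j0 i.+1 = (w lr * ((serz C s + sercst s (- theta)) * d)) i.+1 :> T.
  by rewrite -Phi_fixed_first.
rewrite gi1 mulrDl mulrDr [serz C s * d]mulrC mulrA ser_coefD ser_coefMz.
rewrite (ser_coefM_zconst _ _ zd) (ser_coefM_zconst _ _ (zconstM (zconst_cst (- theta)) zd)).
rewrite (twist_coef_eq0 iota 1 (g lr) i.+1).2 // mul0r addr0 => /esym wd0.
apply/(twist_coef_eq0 iota 1); transitivity ((w lr i : T) * d 0%N * tw r (A r) 0%N).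
  by rewrite -mulrA (mulrC (d 0%N : T)) Ad0 mulr1.
by rewrite wd0 mul0r.
Qed.

Lemma Phi_fixed_coef_pred (j k : 'I_r) i :
  g lr i = 0 :> T -> val j = k.+1 -> g j i = 0 :> T -> g k i = 0 :> T.
Proof.
move=> glr0 jE; have Aj : zconst (A j) by apply: A_zconst; rewrite jE /=.
have zX : zconst (- tw j (A j) * d).
  by apply: zconstM (zconstN (twist_zconst iota j Aj)) (proj1 twist_Ar_inv).
rewrite (Phi_fixed_next jE) ser_coefD (ser_coefM_zconst _ _ zX).
by rewrite ((twist_coef_eq0 iota 1 _ _).2 glr0) mul0r addr0 => /twist_coef_eq0.
Qed.

Lemma Phi_fixed_level_step i : (forall j, g j i.+1 = 0 :> T) -> forall j, g j i = 0 :> T.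
Proof.
move=> gi1; have glr0 := Phi_fixed_last_coef gi1.
suff gk0 n (k : 'I_r) : (k + n)%N = r.-1 -> g k i = 0 :> T.
  by move=> j; apply: (gk0 (r.-1 - j)%N); move: (ltn_ord j); lia.
elim: n k => [|n IHn] k kn.
  by rewrite (_ : k = lr) //; apply: val_inj; rewrite /= -kn addn0.
have k1_lt : (k.+1 < r)%N by move: (ltn_ord k); lia.
apply: (Phi_fixed_coef_pred (j := Ordinal k1_lt)) glr0 _ (IHn _ _) => //=; lia.
Qed.

End Solution.

Lemma Phi_fixed_poly_eq0 (g : 'I_r -> S) :
  rowmul (twistv q 1 g) Ph = g ->
  (forall j, exists N, forall i, (N <= i)%N -> forall m, g j i m = 0) ->
  g = fun _ => ser0 C s.
Proof.
move=> g_fixed g_poly; have [N gN] := fin_nat_bound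
  (P := fun j N => forall i, (N <= i)%N -> forall m, g j i m = 0)
  (fun j N N' le_NN' gN i le_N'i => gN i (leq_trans le_NN' le_N'i)) g_poly.
have gi0 : forall i j, g j i = 0 :> T.
  apply: (nat_down_ind (N := N)) => [i Ni j|i]; last exact: Phi_fixed_level_step.
  by apply: funext => m; apply: gN.
by apply: funext => j; apply: funext => i; rewrite gi0.
Qed.

End NoPolynomialSolution.

(** * Solutions in T_s{z/theta} *)

Section FiniteFieldCoefficients.
Variables (F : finFieldType) (C : fieldType) (R : realType) (iota : {rmorphism F -> C}).
Variables (nrm : C -> R) (s : nat).
Hypotheses (ge0_nrm : forall x, 0 <= nrm x) (nrm_zero_eq : forall x, nrm x = 0 -> x = 0).
Hypothesis nrm_mul : forall x y, nrm (x * y) = nrm x * nrm y.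
Local Notation q := #|F|.

Lemma nrm1 : nrm 1 = 1.
Proof.
have nrm1_neq0 : nrm 1 != 0 by apply: contra_neq (@oner_neq0 C) => /nrm_zero_eq.
by apply: (mulfI nrm1_neq0); rewrite -nrm_mul !mulr1.
Qed.

Lemma nrmX x n : nrm (x ^+ n) = nrm x ^+ n.
Proof. by elim: n => [|n IHn]; rewrite ?expr0 ?nrm1 // !exprS nrm_mul IHn. Qed.

(* Nonzero elements of [F_q] are roots of unity. *)
Lemma nrm_iota c : c != 0 -> nrm (iota c) = 1.
Proof.
move=> c_neq0; have q_gt1 := finNzRing_gt1 F.
have cq1 : c ^+ q.-1 = 1.
  by apply: (mulfI c_neq0); rewrite mulr1 -exprS prednK ?expf_card // ltnW.
have q1_gt0 : (0 < q.-1)%N by rewrite -ltnS prednK // (ltnW q_gt1).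
by apply/eqP; rewrite -(pexpr_eq1 q1_gt0 (ge0_nrm _)) -nrmX -rmorphXn cq1 rmorph1 nrm1.
Qed.

Lemma iota_eq0_nrm_lt1 c : nrm (iota c) < 1 -> iota c = 0.
Proof.
have [->|c_neq0] := eqVneq c 0; first by rewrite rmorph0.
by rewrite nrm_iota // ltxx.
Qed.

Lemma in_Fqtz_of_in_Tz (a : ser C s) : in_Tz nrm q a ->
  (forall i m, exists c, a i m = iota c) -> in_Fqtz iota a.
Proof.
move=> [ta za] a_iota; split=> //.
have a_eq0 i m : nrm (a i m) < 1 -> a i m = 0.
  by have [c ->] := a_iota i m; apply: iota_eq0_nrm_lt1.
have half_gt0 : (0 : R) < 2^-1 by rewrite invr_gt0 ltr0n.
have [Nz aNz] := za _ half_gt0.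
have a_large i m : (Nz <= i)%N -> a i m = 0.
  move=> Nz_i; apply: a_eq0; apply: le_lt_trans (le_trans _ (aNz i Nz_i m)) _.
    by rewrite -[leLHS]mul1r ler_wpM2r ?ge0_nrm // exprn_ege1 // ler1n ltnW ?finNzRing_gt1.
  by rewrite invf_lt1 ?ltr1n.
have [Nt aNt] : exists Nt, forall i : 'I_Nz, forall m, (exists j, (Nt <= m j)%N) -> a i m = 0.
  apply: (fin_nat_bound
    (P := fun (i : 'I_Nz) N => forall m, (exists j, (N <= m j)%N) -> a i m = 0)).
    by move=> i N N' le_NN' aN m [j N'j]; apply: aN; exists j; apply: leq_trans N'j.
  by move=> i; have [N aN] := ta i 1 ltr01; exists N => m /aN /a_eq0.
exists (maxn Nz Nt) => i m [le_i|[j le_mj]].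
  by apply: a_large; apply: leq_trans le_i; rewrite leq_maxl.
have [lt_iNz|] := ltnP i Nz; last exact: a_large.
by apply: (aNt (Ordinal lt_iNz)); exists j; apply: leq_trans le_mj; rewrite leq_maxr.
Qed.

End FiniteFieldCoefficients.

Section FrobeniusLattice.
Variables (F : finFieldType) (C : closedFieldType) (R : realType).
Variables (iota : {rmorphism F -> C}) (theta : C) (nrm : C -> R).
Hypothesis HC : Cinf_axioms iota theta nrm.
Variables (s r : nat) (A : nat -> ser C s) (Psi Psiinv : 'I_r -> 'I_r -> ser C s).
Hypotheses (Psi_Tz : forall i j, in_Tz nrm #|F| (Psi i j))
           (Psiinv_Tz : forall i j, in_Tz nrm #|F| (Psiinv i j)).
Hypotheses (Psi_inv : matmul Psi Psiinv = @idm C s r) (Psiinv_inv : matmul Psiinv Psi = @idm C s r).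
Hypothesis Psi_frob : twistm #|F| 1 Psi = matmul (@Phi C s r #|F| theta A) Psi.
Local Notation q := #|F|.
Local Notation Ph := (@Phi C s r q theta A).
Local Notation tw := (twist iota s 1).
Local Notation S := (ser C s).

Lemma rowmul_in_Tz (g : 'I_r -> S) (P : 'I_r -> 'I_r -> S) :
  (forall k, in_Tz nrm q (g k)) -> (forall k j, in_Tz nrm q (P k j)) ->
  forall j, in_Tz nrm q (rowmul g P j).
Proof.
exact: (in_Tz_rowmul (nrm_ge0 HC) (nrm0 HC) (nrmM HC) (nrm_ultra HC) (ltnW (finNzRing_gt1 F))).
Qed.

Lemma in_Fqtz_in_Tz (a : S) : in_Fqtz iota a -> in_Tz nrm q a.
Proof. by move=> [_ a_fin]; apply: (in_Tz_finite _ (nrm0 HC)). Qed.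

Lemma twistv_Fqtz (f : 'I_r -> S) : (forall j, in_Fqtz iota (f j)) -> twistv q 1 f = f.
Proof.
move=> Ff; apply: funext => j; apply: funext => i; apply: funext => m.
by rewrite /twistv /twistinv /=; have [c ->] := (Ff j).1 i m; apply: frobinv_iota.
Qed.

Lemma twisted_fixed_Fqtz (f : 'I_r -> ser C s) :
  (forall j, in_Tz nrm q (f j)) -> twistv q 1 f = f -> forall j, in_Fqtz iota (f j).
Proof.
move=> Tf f_fixed j; apply: (in_Fqtz_of_in_Tz (nrm_ge0 HC) (nrm_eq0 HC) (nrmM HC)) => // i m.
by apply: (frobinv_fixed iota); have := congr1 (fun h => h j i m) f_fixed.
Qed.

Lemma Phi_fixedP (g : 'I_r -> S) :
  rowmul (twistv q 1 g) Ph = g <-> twistv q 1 (rowmul g Psi) = rowmul g Psi.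
Proof.
have rv_twist (h : 'I_r -> S) : rv_of (twistv q 1 h) = map_mx tw (rv_of h) by apply: (rv_of_map tw).
have Psi_frob' : map_mx tw (mx_of Psi) = mx_of Ph *m mx_of Psi.
  by rewrite -mx_of_matmul -Psi_frob -(mx_of_map tw).
have Psi_inv' : mx_of Psi *m mx_of Psiinv = 1%:M by rewrite -mx_of_matmul Psi_inv mx_of_idm.
have := twisted_fixed_rowP Psi_inv' Psi_frob' (rv_of g).
rewrite -rv_twist -!rv_of_rowmul -rv_twist => fixedP.
by split=> fixed_g; apply: rv_of_inj; apply/fixedP; rewrite fixed_g.
Qed.

Lemma VphiP (g : 'I_r -> S) : Vphi nrm q theta A g <->
  exists2 f, (forall j, in_Fqtz iota (f j)) & g = rowmul f Psiinv.
Proof.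
split=> [[Tg /Phi_fixedP g_fixed] | [f Ff ->]].
  exists (rowmul g Psi); last by rewrite rowmul_matmul Psi_inv rowmul_idm.
  by apply: twisted_fixed_Fqtz => //; apply: rowmul_in_Tz.
split; first by apply: rowmul_in_Tz => // k; apply: in_Fqtz_in_Tz.
by apply/Phi_fixedP; rewrite rowmul_matmul Psiinv_inv rowmul_idm twistv_Fqtz.
Qed.

Lemma rowmul_Psiinv_inj : injective (fun f : 'I_r -> S => rowmul f Psiinv).
Proof.
move=> f f' /= ff'.
by rewrite -[f]rowmul_idm -[f']rowmul_idm -Psiinv_inv -!rowmul_matmul ff'.
Qed.

End FrobeniusLattice.

Unset Implicit Arguments.
Set Strict Implicit.

Theorem proposition4p14
  (F : finFieldType) (C : closedFieldType) (R : realType)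
  (iota : {rmorphism F -> C}) (theta : C) (nrm : C -> R)
  (HC : Cinf_axioms iota theta nrm)
  (s r : nat) (Hr : (0 < r)%N) (A : nat -> ser C s)
  (HA : forall k, (1 <= k <= r)%N -> in_T nrm (A k))
  (HAr : exists B, in_T nrm B /\ sermul (A r) B = ser1 C s)
  (Psi Psiinv : 'I_r -> 'I_r -> ser C s)
  (HPsi : forall i j, in_Tz nrm #|F| (Psi i j))
  (HPsiinv : forall i j, in_Tz nrm #|F| (Psiinv i j))
  (Hinv1 : matmul Psi Psiinv = @idm C s r)
  (Hinv2 : matmul Psiinv Psi = @idm C s r)
  (HPsiFrob : twistm #|F| 1 Psi = matmul (@Phi C s r #|F| theta A) Psi) :
  (* (a) V_phi = Mat_{1 x r}(F_q[t][z]) Psi^{-1} *)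
  (forall g : 'I_r -> ser C s,
     Vphi nrm #|F| theta A g <->
     exists f : 'I_r -> ser C s,
       (forall j, in_Fqtz iota (f j)) /\ g = rowmul f Psiinv) /\
  (* (b) V_phi is a free F_q[t][z]-module of rank r *)
  (exists b : 'I_r -> 'I_r -> ser C s,
     (forall c : 'I_r -> ser C s, (forall k, in_Fqtz iota (c k)) ->
        Vphi nrm #|F| theta A (lincomb c b)) /\
     (forall g, Vphi nrm #|F| theta A g ->
        exists c : 'I_r -> ser C s,
          (forall k, in_Fqtz iota (c k)) /\ g = lincomb c b /\
          forall c' : 'I_r -> ser C s, (forall k, in_Fqtz iota (c' k)) ->
             g = lincomb c' b -> c' = c)) /\
  (* (c) V_phi meets Mat_{1 x r}(T_s[z]) only in 0 *)
  (forall g : 'I_r -> ser C s,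
     Vphi nrm #|F| theta A g -> (forall j, in_Tpolz nrm (g j)) ->
     g = (fun _ => ser0 C s)).
Proof.
have VP := VphiP HC HPsi HPsiinv Hinv1 Hinv2 HPsiFrob.
split; last split.
- by move=> g; rewrite VP; split=> [[f]|[f []]]; exists f.
- exists Psiinv; split=> [c Fc | g /VP [f Ff gE]]; first by apply/VP; exists c.
  exists f; split; [done | split=> [// | c' _ gE']].
  by apply: (rowmul_Psiinv_inj Hinv2); rewrite -gE.
- move=> g [_ g_fixed] g_poly.
  have A_zconst k (k_range : (1 <= k <= r)%N) : zconst (A k) := (HA k k_range).2.
  have [B [[_ zB] ArB]] := HAr.
  apply: (Phi_fixed_poly_eq0 iota Hr A_zconst (ex_intro2 _ _ B zB ArB) g_fixed) => j.
  by case: (g_poly j).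
Qed.
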